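(* Let $\mathcal{G}=(\mathcal{V},\mathcal{E})$ be a connected undirected graph (a transmission network) with nodes $\mathcal{V}=\{1,\dots,N\}$ and edges $e_1,\dots,e_L$, $\mathcal{L}=\{1,\dots,L\}$, each edge given a fixed orientation, with incidence matrix $\mathbf{Q}=(q_{il})\in\mathbb{R}^{N\times L}$ ($q_{il}=1$ if $i$ is the initial node of $e_l$, $-1$ if it is the terminal node, $0$ otherwise). For each node $i\in\mathcal{V}$ let $T'_{doi}>0$, $X_{di}>X'_{di}$, $B_{ii}<0$, set $\alpha_i=\frac{1}{X_{di}-X'_{di}}-B_{ii}$ and $\gamma_i=\frac{T'_{doi}}{X_{di}-X'_{di}}$, and consider the scalar linear node plant $$H^V_{pi}:\ \dot x^V_{pi}=-\tfrac{\alpha_i}{\gamma_i}x^V_{pi}+\tfrac{1}{\gamma_i}u^V_{pi},\qquad y^V_{pi}=x^V_{pi}.$$ For each edge $l\in\mathcal{L}$ let $\tau^V_l>0$, $K^V_{l[1]}>0$ and consider the edge controller $$H^V_{cl}:\ \dot x^V_{cl}=-\tfrac{1}{\tau^V_l}x^V_{cl}+\tfrac{K^V_{l[1]}}{\tau^V_l}u^V_{cl},\qquad y^V_{cl}=x^V_{cl}.$$ Consider the negative feedback interconnection in which, for each edge $e_l$ with initial node $i$ and terminal node $j$, $u^V_{cl}=y^V_{pi}-y^V_{pj}$, and for each node $i$, $u^V_{pi}=-\sum_{l=1}^L q_{il}y^V_{cl}$. Then this closed-loop system achieves output consensus: there exists an open domain $\mathcal{D}_c$ in the joint state space containing the origin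 such that $\lim_{t\to\infty}|y^V_{pi}(t)-y^V_{pj}(t)|=0$ for all $i,j\in\mathcal{V}$ and all initial conditions in $\mathcal{D}_c$.
   Context: In the application, $x^V_{pi}$ is the deviation of the voltage magnitude of generator bus $i$ from its nominal value; $T'_{doi}$ is the direct axis transient open-circuit time constant, $X_{di}$ and $X'_{di}$ the direct axis synchronous and transient reactances, and $B_{ii}$ the self-susceptance. *)

From HB Require Import structures.
From mathcomp Require Import all_boot all_order all_algebra.
From mathcomp Require Import all_classical all_reals all_analysis.
Set Implicit Arguments. Unset Strict Implicit. Unset Printing Implicit Defensive.
Import Order.TTheory GRing.Theory Num.Theory.
Local Open Scope ring_scope.

(* An oriented multigraph on nodes 'I_N with edges 'I_L:
   edge l goes from node [src l] (initial) to node [dst l] (terminal). *)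

Definition adjacent (N L : nat) (src dst : 'I_L -> 'I_N) : rel 'I_N :=
  fun i j => [exists l, ((src l == i) && (dst l == j)) || ((src l == j) && (dst l == i))].

Definition graph_connected (N L : nat) (src dst : 'I_L -> 'I_N) : Prop :=
  forall i j : 'I_N, connect (adjacent src dst) i j.

Definition incidence (R : realType) (N L : nat) (src dst : 'I_L -> 'I_N)
  (i : 'I_N) (l : 'I_L) : R :=
  if src l == i then 1 else if dst l == i then -1 else 0.

(* The weighted energy [V = sum_i gamma_i xp_i^2 + sum_l (tau_l / K_l) xc_l^2]
   is a storage function for the closed loop: the coupling terms cancel because
   the controller input [Q^T yp] is adjoint to the plant input [- Q yc], so
   [V' = -2 (sum_i alpha_i xp_i^2 + sum_l xc_l^2 / K_l) <= - 2 c V] for some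
   [c > 0].  Hence [V] tends to 0, and with it every plant output; outputs that
   all tend to 0 are in consensus. *)

From HB Require Import structures.
From mathcomp Require Import all_boot all_order all_algebra.
From mathcomp Require Import all_classical all_reals all_analysis.
From mathcomp Require Import ring lra.
Import Order.TTheory GRing.Theory Num.Theory.
Import numFieldNormedType.Exports.
Local Open Scope classical_set_scope.
Local Open Scope ring_scope.

Section Decay.
Context {R : realType}.

Lemma derive1_is_derive {f : R -> R} {t df : R} :
  derivable f t 1 -> derive1 f t = df -> is_derive t 1 f df.
Proof. by move=> /derivableP; rewrite -derive1E => + <-. Qed.

Lemma is_derive_weighted_sumsq {n : nat} (w : 'I_n -> R) {f : 'I_n -> R -> R}
    {df : 'I_n -> R} {t : R} :
  (forall i, is_derive t 1 (f i) (df i)) ->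
  is_derive t 1 (fun s => \sum_i w i * f i s ^+ 2) (2 * \sum_i w i * f i t * df i).
Proof.
move=> fdf; have := is_derive_sum (fun i => is_deriveZ (w i) (is_deriveX 2 (fdf i))).
rewrite fct_sumE => sum_derive; apply: is_derive_eq sum_derive _.
by rewrite mulr_sumr; apply: eq_bigr => i _; rewrite /GRing.scale /=; ring.
Qed.

Lemma exists_common_ratio {I : finType} {a b : I -> R} :
  (forall i, 0 < a i) -> (forall i, 0 < b i) ->
  exists2 c, 0 < c & forall i, c * a i <= b i.
Proof.
move=> a_gt0 b_gt0; pose S := 1 + \sum_i a i / b i.
have ratio_ge0 i : 0 <= a i / b i by rewrite divr_ge0 ?ltW.
have S_gt0 : 0 < S by rewrite ltr_pwDl ?sumr_ge0.
exists S^-1; rewrite ?invr_gt0 // => i.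
rewrite mulrC ler_pdivrMr // -ler_pdivrMl // mulrC /S.
by rewrite ler_wpDl // (bigD1 i) //= lerDl sumr_ge0.
Qed.

Lemma is_derive_affine (a b t : R) : is_derive t 1 (fun s => a + b * s) b.
Proof.
have := is_deriveD (is_derive_cst a t 1) (is_deriveZ b (is_derive_id t 1)).
by rewrite add0r /GRing.scale /= mulr1.
Qed.

(* [V s * (1 + c s)] is nonincreasing: a polynomial substitute for the
   Gronwall factor [expR (c s)], enough for convergence to 0. *)
Lemma lyapunov_cvg0 (V dV : R -> R) (c : R) : 0 < c ->
  (forall t : R, 0 <= V t) ->
  (forall t : R, 0 < t -> is_derive t 1 V (dV t)) ->
  (forall t : R, 0 < t -> dV t <= - c * V t) ->
  V t @[t --> +oo] --> 0.
Proof.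
move=> c_gt0 V_ge0 dVdt dV_le.
pose W s := V s * (1 + c * s).
have dWdt (t : R) : 0 < t -> is_derive t 1 W (dV t * (1 + c * t) + V t * c).
  move=> t_gt0; apply: is_derive_eq.
    exact: (is_deriveM (dVdt t t_gt0) (is_derive_affine 1 c t)).
  by rewrite /GRing.scale /=; ring.
have W_nincr (t : R) : 1 <= t -> W t <= W 1.
  move=> t_ge1; apply: (@ler0_derive1_nincry _ W 1) => // [s|s|].
  - by rewrite in_itv /= andbT => /(lt_trans ltr01)/dWdt [].
  - rewrite in_itv /= andbT derive1E => /(lt_trans ltr01) s_gt0.
    rewrite (derive_val (is_derive := dWdt s s_gt0)).
    have cs_ge0 : 0 <= c * s by rewrite mulr_ge0 ?ltW.
    have damped : (dV s + c * V s) * (1 + c * s) <= 0.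
      apply: mulr_le0_ge0; last by rewrite addr_ge0.
      by have := dV_le s s_gt0; lra.
    have : 0 <= c * V s * (c * s) by rewrite mulr_ge0 // mulr_ge0 // ltW.
    nra.
  - apply: derivable_within_continuous => s.
    by rewrite in_itv /= andbT => /(lt_le_trans ltr01)/dWdt [].
have inv_cvg0 : t^-1 @[t --> +oo] --> (0 : R).
  apply/gtr0_cvgV0; last exact: cvg_id.
  by near=> t; near: t; apply: nbhs_pinfty_gt; rewrite num_real.
apply: (@squeeze_cvgr _ _ _ _ (cst 0) (fun t => W 1 / c * t^-1)).
- near=> t; rewrite V_ge0 /=.
  have t_ge1 : 1 <= t by near: t; apply: nbhs_pinfty_ge; rewrite num_real.
  have t_gt0 : 0 < t := lt_le_trans ltr01 t_ge1.
  rewrite mulrAC ler_pdivlMr // ler_pdivlMr //.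
  apply: le_trans (W_nincr t t_ge1).
  by rewrite /W -mulrA ler_wpM2l // lerDr.
- exact: cvg_cst.
- by rewrite -(mulr0 (W 1 / c)); apply: cvgM inv_cvg0; exact: cvg_cst.
Unshelve. all: end_near. Qed.

Lemma cvg0_of_weighted_sqr_le {T : Type} {F : set_system T} {FF : Filter F}
    {f g : T -> R} {a : R} :
  0 < a -> (forall x, a * f x ^+ 2 <= g x) -> g @ F --> 0 -> f @ F --> 0.
Proof.
move=> a_gt0 fg /cvgr0Pnorm_lt g_cvg0; apply/cvgr0Pnorm_lt => e e_gt0.
have ae2_gt0 : 0 < a * e ^+ 2 by rewrite mulr_gt0 // exprn_gt0.
near=> x.
have gx_lt : g x < a * e ^+ 2 by apply: le_lt_trans (ler_norm _) _; near: x; exact: g_cvg0.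
have := le_lt_trans (fg x) gx_lt; rewrite ltr_pM2l // => f2_lt.
by rewrite ltr_norml; apply/andP; split; nra.
Unshelve. all: end_near. Qed.

End Decay.

Section Incidence.
Context {R : realType} {N L : nat} {src dst : 'I_L -> 'I_N}.
Hypothesis src_neq_dst : forall l, src l != dst l.

Lemma incidence_sum (x : 'I_N -> R) l :
  \sum_i incidence R src dst i l * x i = x (src l) - x (dst l).
Proof.
have dst_neq_src : dst l != src l by rewrite eq_sym.
rewrite (bigD1 (src l)) //= (bigD1 (dst l)) //= big1 ?addr0.
  by rewrite /incidence eqxx (negbTE (src_neq_dst l)) eqxx mul1r mulN1r.
move=> k /andP[k_neq_src k_neq_dst].
by rewrite /incidence eq_sym (negbTE k_neq_src) eq_sym (negbTE k_neq_dst) mul0r.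
Qed.

Lemma incidence_adjoint (x : 'I_N -> R) (y : 'I_L -> R) :
  \sum_i x i * \sum_l incidence R src dst i l * y l
  = \sum_l y l * (x (src l) - x (dst l)).
Proof.
under eq_bigr do rewrite mulr_sumr.
rewrite exchange_big /=; apply: eq_bigr => l _.
by rewrite -incidence_sum mulr_sumr; apply: eq_bigr => i _; ring.
Qed.

End Incidence.

Section ClosedLoop.
Context {R : realType} {N L : nat} {src dst : 'I_L -> 'I_N}.
Hypothesis src_neq_dst : forall l, src l != dst l.
Context {alpha gamma : 'I_N -> R} {tau K : 'I_L -> R}.
Hypotheses (alpha_gt0 : forall i, 0 < alpha i) (gamma_gt0 : forall i, 0 < gamma i).
Hypotheses (tau_gt0 : forall l, 0 < tau l) (K_gt0 : forall l, 0 < K l).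
Context {xp : 'I_N -> R -> R} {xc : 'I_L -> R -> R}.
Hypothesis plant : forall i (t : R), 0 < t ->
  is_derive t 1 (xp i) (- (alpha i / gamma i) * xp i t
    + (gamma i)^-1 * (- \sum_l incidence R src dst i l * xc l t)).
Hypothesis controller : forall l (t : R), 0 < t ->
  is_derive t 1 (xc l) (- (tau l)^-1 * xc l t
    + (K l / tau l) * (xp (src l) t - xp (dst l) t)).

Definition storage (t : R) : R :=
  \sum_i gamma i * xp i t ^+ 2 + \sum_l tau l / K l * xc l t ^+ 2.

Definition dissipation (t : R) : R :=
  \sum_i alpha i * xp i t ^+ 2 + \sum_l (K l)^-1 * xc l t ^+ 2.

Lemma storage_is_derive (t : R) : 0 < t ->
  is_derive t 1 storage (- 2 * dissipation t).
Proof.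
move=> t_gt0; apply: is_derive_eq.
  exact: is_deriveD (is_derive_weighted_sumsq gamma (fun i => plant i t t_gt0))
    (is_derive_weighted_sumsq (fun l => tau l / K l) (fun l => controller l t t_gt0)).
have plant_power : \sum_i gamma i * xp i t * (- (alpha i / gamma i) * xp i t
      + (gamma i)^-1 * (- \sum_l incidence R src dst i l * xc l t))
    = - \sum_i alpha i * xp i t ^+ 2 - \sum_l xc l t * (xp (src l) t - xp (dst l) t).
  rewrite -(incidence_adjoint src_neq_dst (xp ^~ t)) -sumrN -sumrB; apply: eq_bigr => i _.
  by field; rewrite gt_eqF.
have controller_power : \sum_l tau l / K l * xc l t * (- (tau l)^-1 * xc l t
      + (K l / tau l) * (xp (src l) t - xp (dst l) t))
    = - \sum_l (K l)^-1 * xc l t ^+ 2 + \sum_l xc l t * (xp (src l) t - xp (dst l) t).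
  rewrite -sumrN -big_split /=; apply: eq_bigr => l _.
  by field; rewrite !gt_eqF.
by rewrite plant_power controller_power /dissipation; ring.
Qed.

Lemma storage_ge0 (t : R) : 0 <= storage t.
Proof.
by rewrite addr_ge0 // sumr_ge0 // => k _; rewrite mulr_ge0 ?sqr_ge0 ?ltW ?divr_gt0.
Qed.

Lemma dissipation_ge_storage :
  exists2 c, 0 < c & forall t, c * storage t <= dissipation t.
Proof.
have [c1 c1_gt0 c1_le] := exists_common_ratio gamma_gt0 alpha_gt0.
have [c2 c2_gt0 c2_le] := exists_common_ratio tau_gt0 (fun=> @ltr01 R).
exists (Num.min c1 c2) => [|t]; first by rewrite lt_min c1_gt0.
rewrite mulrDr !mulr_sumr; apply: lerD; apply: ler_sum => k _;
  rewrite mulrA ler_wpM2r ?sqr_ge0 //.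
- by apply: le_trans (c1_le k); rewrite ler_wpM2r ?(ltW (gamma_gt0 k)) // ge_min lexx.
- rewrite mulrA -[leRHS]mul1r ler_wpM2r ?invr_ge0 ?(ltW (K_gt0 k)) //.
  by apply: le_trans (c2_le k); rewrite ler_wpM2r ?(ltW (tau_gt0 k)) // ge_min lexx orbT.
Qed.

Lemma storage_cvg0 : storage t @[t --> +oo] --> 0.
Proof.
have [c c_gt0 cV_le_D] := dissipation_ge_storage.
apply: (@lyapunov_cvg0 _ _ (fun t => - 2 * dissipation t) (2 * c)).
- by rewrite mulr_gt0.
- exact: storage_ge0.
- exact: storage_is_derive.
- by move=> t _; have := cV_le_D t; lra.
Qed.

Lemma plant_state_cvg0 i : xp i t @[t --> +oo] --> 0.
Proof.
apply: (cvg0_of_weighted_sqr_le (gamma_gt0 i) _ storage_cvg0) => t.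
rewrite /storage ler_wpDr ?sumr_ge0 // => [l _|].
  by rewrite mulr_ge0 ?sqr_ge0 ?ltW ?divr_gt0.
by rewrite (bigD1 i) //= lerDl sumr_ge0 // => k _; rewrite mulr_ge0 ?sqr_ge0 ?ltW.
Qed.

End ClosedLoop.

Theorem theorem4 (R : realType) (N L : nat) (src dst : 'I_L -> 'I_N)
  (Tdo Xd Xd' B : 'I_N -> R) (tau K : 'I_L -> R) :
  (forall l, src l != dst l) ->
  graph_connected src dst ->
  (forall i, 0 < Tdo i) -> (forall i, Xd' i < Xd i) -> (forall i, B i < 0) ->
  (forall l, 0 < tau l) -> (forall l, 0 < K l) ->
  let alpha i := (Xd i - Xd' i)^-1 - B i in
  let gamma i := Tdo i / (Xd i - Xd' i) in
  exists Dc : set ('rV[R]_N * 'rV[R]_L),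
    open Dc /\ Dc (0, 0) /\
    forall (xp : 'I_N -> R -> R) (xc : 'I_L -> R -> R),
      (* trajectories are continuous on [0, +oo) *)
      (forall i, {within `[0, +oo[, continuous (xp i)}) ->
      (forall l, {within `[0, +oo[, continuous (xc l)}) ->
      (* plant dynamics with u_pi = - sum_l q_il y_cl, for t > 0 *)
      (forall i (t : R), 0 < t ->
         derivable (xp i) t 1 /\
         derive1 (xp i) t = - (alpha i / gamma i) * xp i t
                        + (gamma i)^-1 * (- \sum_(l < L) incidence R src dst i l * xc l t)) ->
      (* controller dynamics with u_cl = y_p(src l) - y_p(dst l), for t > 0 *)
      (forall l (t : R), 0 < t ->
         derivable (xc l) t 1 /\
         derive1 (xc l) t = - (tau l)^-1 * xc l t
                        + (K l / tau l) * (xp (src l) t - xp (dst l) t)) ->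
      (* initial condition in Dc *)
      Dc (\row_i xp i 0, \row_l xc l 0) ->
      forall i j : 'I_N, `|xp i t - xp j t| @[t --> +oo] --> 0.
Proof.
move=> src_neq_dst _ Tdo_gt0 Xd'_lt_Xd B_lt0 tau_gt0 K_gt0 alpha gamma.
have reactance_gt0 i : 0 < Xd i - Xd' i by rewrite subr_gt0.
have alpha_gt0 i : 0 < alpha i by rewrite addr_gt0 ?invr_gt0 ?oppr_gt0.
have gamma_gt0 i : 0 < gamma i by rewrite divr_gt0.
exists setT; split; first exact: openT.
split=> // xp xc _ _ plant controller _ i j.
have xp_cvg0 := plant_state_cvg0 src_neq_dst alpha_gt0 gamma_gt0 tau_gt0 K_gt0
  (fun k t t_gt0 => derive1_is_derive (plant k t t_gt0).1 (plant k t t_gt0).2)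
  (fun l t t_gt0 => derive1_is_derive (controller l t t_gt0).1 (controller l t t_gt0).2).
have := cvg_norm (cvgB (xp_cvg0 i) (xp_cvg0 j)).
by rewrite subr0 normr0; apply.
Qed.
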